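(* Consider the kinodynamic planning setting described in the context, with kinodynamic cost $c^*$ satisfying the triangle inequality, a learned steering function $\tilde S$ with the stated probability-$p$ property, a valid trajectory $\pi:[0,t_\pi]\to X_{\mathrm{free}}$ from $x_{\mathrm{init}}$ to $x_{\mathrm{goal}}$ of clearance $\delta_{\mathrm{clear}}>0$, $v=\min(\delta_{\mathrm{clear}},\delta_{\mathrm{goal}})$, and points $x_0=x_{\mathrm{init}},\dots,x_m=x_{\mathrm{goal}}$ on $\pi$ with $c^*(x_i,x_{i+1})\le v/3$ for all $0\le i<m$. Suppose the S3F-RRT* tree contains a vertex $x_i'$ with $x_i'\in B_{v/3}(x_i)$ for some $0\le i<m$. If a sampled state $x_{\mathrm{rand}}$ satisfies $x_{\mathrm{rand}}\in B_{v/3}(x_{i+1})$ and $c^*(x_i,x_{\mathrm{rand}})\le v/3$, and $x_{\mathrm{near}}$ is the nearest neighbor of $x_{\mathrm{rand}}$ among the tree vertices (i.e. a tree vertex minimizing $c^*(\cdot,x_{\mathrm{rand}})$), then with probability $p$ the path produced by $\tilde S(x_{\mathrm{near}},x_{\mathrm{rand}})$ from $x_{\mathrm{near}}$ to $x_{\mathrm{rand}}$ lies entirely in $X_{\mathrm{free}}$.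
   Context: State space $X$, obstacle-free set $X_{\mathrm{free}}\subseteq X$, robot dynamics $\dot x=f(x,u)$ with controls $u\in U$. For $x_a,x_b\in X$, $c^*(x_a,x_b)$ is the cost (e.g. duration) of the optimal dynamically feasible trajectory from $x_a$ to $x_b$ (the kinodynamic distance); it is assumed to satisfy $c^*(x_a,x_b)\le c^*(x_a,x)+c^*(x,x_b)$ for all $x\in X$. $B_r(x)=\{x'\in X: c^*(x',x)\le r\}$. A learned steering function $\tilde S(x_a,x_b)$ returns a control function whose integration from $x_a$ under the dynamics gives a state function $\tilde\Gamma:[0,t_f]\to X$; it is assumed that with nonzero probability $p$, $\tilde\Gamma$ satisfies $c^*(\tilde\Gamma(t),x_b)\le c^*(x_a,x_b)$ for all $t\in[0,t_f]$. The goal region contains a ball $X^*_{\mathrm{goal}}=B_{\delta_{\mathrm{goal}}}(x_{\mathrm{goal}})$ with $\delta_{\mathrm{goal}}>0$. The clearance of a trajectory $\pi$ is the maximal $\delta_{\mathrm{clear}}$ such that $B_{\delta_{\mathrm{clear}}}(\pi(t))\subseteq X_{\mathrm{free}}$ for all $t\in[0,t_\pi]$. S3F-RRT* is an RRT*-type planner that builds a tree rooted at $x_{\mathrm{init}}$: each iteration samples a random collision-free state $x_{\mathrm{rand}}$, considers tree vertices near $x_{\mathrm{rand}}$ as candidate parents, steers from each with $\tilde S$, and adds the end state of the lowest-cost collision-free steered trajectory ending within an error radius of $x_{\mathrm{rand}}$ as a new vertex, followed by a rewiring step. *)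

From HB Require Import structures.
From mathcomp Require Import all_boot all_order all_algebra.
From mathcomp Require Import all_classical all_reals all_analysis.
Set Implicit Arguments. Unset Strict Implicit. Unset Printing Implicit Defensive.
Import Order.TTheory GRing.Theory Num.Theory.
Local Open Scope classical_set_scope.
Local Open Scope ring_scope.

Definition kball (R : realType) (X : Type) (c : X -> X -> R) (r : R) (x : X) : set X :=
  [set x' | c x' x <= r].

Definition clear_at (R : realType) (X : Type) (c : X -> X -> R) (Xfree : set X)
  (pi : R -> X) (tpi d : R) : Prop :=
  forall t, 0 <= t <= tpi -> kball c d (pi t) `<=` Xfree.

Definition is_clearance (R : realType) (X : Type) (c : X -> X -> R) (Xfree : set X)
  (pi : R -> X) (tpi d : R) : Prop :=
  clear_at c Xfree pi tpi d /\ (forall d', clear_at c Xfree pi tpi d' -> d' <= d).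

Definition steer_good (R : realType) (X : Type) (c : X -> X -> R)
  (Gamma : R -> X) (tf : R) (xa xb : X) : Prop :=
  forall t, 0 <= t <= tf -> c (Gamma t) xb <= c xa xb.

From HB Require Import structures.
From mathcomp Require Import all_boot all_order all_algebra.
From mathcomp Require Import all_classical all_reals all_analysis.
From mathcomp Require Import ring.
Import Order.TTheory GRing.Theory Num.Theory.
Local Open Scope classical_set_scope.
Local Open Scope ring_scope.

(* Every state Gamma(t) of a good steered trajectory towards x_rand is within
   c*(x_near, x_rand) of x_rand, and since x_near is a nearest neighbour this is
   at most c*(x_i', x_rand) <= c*(x_i', x_i) + c*(x_i, x_rand) <= 2v/3.  One more
   triangle inequality puts Gamma(t) within v <= delta_clear of the trajectory
   point x_{i+1}, so Gamma(t) lies in the clearance ball there. *)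

Section KinodynamicBalls.
Context {R : realType} {X : Type} {c : X -> X -> R}.
Hypothesis c_triangle : forall xa xb x, c xa xb <= c xa x + c x xb.

Lemma kball_le {r s : R} (x : X) : r <= s -> kball c r x `<=` kball c s x.
Proof. by move=> rs y /= /le_trans; apply. Qed.

Lemma kball_trans {r s : R} {x y z : X} :
  kball c r y z -> kball c s x y -> kball c (r + s) x z.
Proof.
by rewrite /kball /= => zy yx; apply: le_trans (c_triangle z x y) _; exact: lerD.
Qed.

Lemma steer_good_kball {Gamma : R -> X} {tf : R} {xa xb : X} {t : R} :
  steer_good c Gamma tf xa xb -> 0 <= t <= tf -> kball c (c xa xb) xb (Gamma t).
Proof. by move=> good; apply: good. Qed.

Lemma clear_at_kball {Xfree : set X} {traj : R -> X} {tpi d r s : R} :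
  clear_at c Xfree traj tpi d -> 0 <= s <= tpi -> r <= d ->
  kball c r (traj s) `<=` Xfree.
Proof.
by move=> clear hs rd; apply: subset_trans (clear s hs); exact: kball_le.
Qed.

Lemma steer_good_clear {Xfree : set X} {traj : R -> X} {tpi d s : R}
    {Gamma : R -> X} {tf : R} {xa xb : X} :
  clear_at c Xfree traj tpi d -> 0 <= s <= tpi -> c xa xb + c xb (traj s) <= d ->
  steer_good c Gamma tf xa xb -> forall t, 0 <= t <= tf -> Xfree (Gamma t).
Proof.
move=> clear hs hd good t ht.
exact: clear_at_kball clear hs hd _ (kball_trans (steer_good_kball good ht) (lexx _)).
Qed.

Lemma nearest_le_kball {V : set X} {xnear x' y xrand : X} {r s : R} :
  (forall z, V z -> c xnear xrand <= c z xrand) -> V x' ->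
  kball c r y x' -> c y xrand <= s -> c xnear xrand <= r + s.
Proof.
by move=> nearest Vx' x'y yx; apply: le_trans (nearest _ Vx') (kball_trans x'y yx).
Qed.

End KinodynamicBalls.

Theorem lemma2p1
  (R : realType) (X : Type) (c : X -> X -> R)
  (* triangle inequality of the kinodynamic distance *)
  (htri : forall xa xb x, c xa xb <= c xa x + c x xb)
  (Xfree : set X)
  (* randomness of the learned steering function *)
  (d : measure_display) (Omega : measurableType d) (P : probability Omega R)
  (* learned steering: from xa towards xb, outcome w gives the state function
     Gamma = Gam xa xb w on [0, tf xa xb w] with Gamma 0 = xa *)
  (Gam : X -> X -> Omega -> R -> X) (tf : X -> X -> Omega -> R)
  (htf : forall xa xb w, 0 <= tf xa xb w)
  (hstart : forall xa xb w, Gam xa xb w 0 = xa)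
  (p : R) (hp : 0 < p)
  (hsteer : forall xa xb,
      measurable [set w | steer_good c (Gam xa xb w) (tf xa xb w) xa xb] /\
      P [set w | steer_good c (Gam xa xb w) (tf xa xb w) xa xb] = p%:E)
  (* goal region ball, valid trajectory with clearance *)
  (xinit xgoal : X) (dgoal : R) (hdgoal : 0 < dgoal)
  (pi : R -> X) (tpi : R) (htpi : 0 <= tpi)
  (hpi0 : pi 0 = xinit) (hpi1 : pi tpi = xgoal)
  (hpifree : forall t, 0 <= t <= tpi -> Xfree (pi t))
  (dclear : R) (hdclear : 0 < dclear)
  (hclear : is_clearance c Xfree pi tpi dclear)
  (v : R) (hv : v = Num.min dclear dgoal)
  (* points x_0 = xinit, ..., x_m = xgoal on pi *)
  (m : nat) (xs : nat -> X)
  (hxs_on : forall k, (k <= m)%N -> exists s, 0 <= s <= tpi /\ pi s = xs k)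
  (hx0 : xs 0%N = xinit) (hxm : xs m = xgoal)
  (hstep : forall k, (k < m)%N -> c (xs k) (xs k.+1) <= v / 3)
  (* the tree: finite vertex set containing x_i' in B_{v/3}(x_i) *)
  (V : set X) (hVfin : finite_set V) (hVroot : V xinit)
  (i : nat) (him : (i < m)%N) (xi' : X) (hxi'V : V xi')
  (hxi' : kball c (v / 3) (xs i) xi')
  (* the sample *)
  (xrand : X) (hxrandfree : Xfree xrand)
  (hxrand1 : kball c (v / 3) (xs i.+1) xrand)
  (hxrand2 : c (xs i) xrand <= v / 3)
  (* nearest neighbour *)
  (xnear : X) (hxnearV : V xnear)
  (hxnear : forall y, V y -> c xnear xrand <= c y xrand) :
  exists E : set Omega, measurable E /\ P E = p%:E /\
    forall w, E w -> forall t, 0 <= t <= tf xnear xrand w ->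
      Xfree (Gam xnear xrand w t).
Proof.
have [Emeas PE] := hsteer xnear xrand.
exists [set w | steer_good c (Gam xnear xrand w) (tf xnear xrand w) xnear xrand].
split=> //; split=> // w good.
have [s [hs pis]] := hxs_on i.+1 him.
have near_rand := nearest_le_kball htri hxnear hxi'V hxi' hxrand2.
have v_le_clear : v <= dclear by rewrite hv ge_min lexx.
have thirds : v / 3 + v / 3 + v / 3 = v by field.
have within_clear : c xnear xrand + c xrand (pi s) <= dclear.
  by rewrite pis; apply: le_trans v_le_clear; rewrite -[leRHS]thirds; exact: lerD near_rand hxrand1.
exact: (steer_good_clear htri hclear.1 hs within_clear good).
Qed.
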